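(* Let $m\ge n$ be positive integers and set $$A_{m,n}=\sum_{i,j\ge1}p_{i+j}\,Q_{m-i}(\alpha)\,Q_{n-j}(\alpha)=\sum_\lambda b_\lambda q_\lambda(\alpha).$$ Then $b_\lambda=\big[m'(1-\delta_{m,m'})-n'\big]\alpha$ if $\lambda=(m',n')$ is a partition with at most two parts (with $n'\ge0$) satisfying $\lambda\ge(m,n)$ in dominance order, and $b_\lambda=0$ otherwise.
   Context: $F=\mathbb{Q}(\alpha)$, $\Lambda_F=F[p_1,p_2,\dots]$ with $p_n$ the power sums. For a partition $\lambda$, $l(\lambda)$ is its number of parts and $z_\lambda=\prod_i i^{m_i}m_i!$ with $m_i$ the multiplicity of $i$. $Q_n(\alpha)=\sum_{\lambda\vdash n}\alpha^{-l(\lambda)}z_\lambda^{-1}p_\lambda$ for $n\ge1$, $Q_0=1$, $Q_n=0$ for $n<0$; $q_\lambda=Q_{\lambda_1}Q_{\lambda_2}\cdots$ (a basis of $\Lambda_F$). Dominance order: $\lambda\ge\mu$ iff $|\lambda|=|\mu|$ and $\lambda_1+\dots+\lambda_i\ge\mu_1+\dots+\mu_i$ for all $i$. (In the paper $A_{m,n}$ is written as $\sum_{i,j\ge1}h_{-(i+j)}(h_i.Q_m)(h_j.Q_n)$ with $h_{-k}$ multiplication by $p_k$ and $h_k=k\alpha\,\partial/\partial p_k$, which satisfy $h_i.Q_m=Q_{m-i}$.) *)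

(* F = Q(alpha) = {fraction {poly rat}}, alpha = 'X.
   Lambda_F restricted to the first N power sums: {mpoly F[N]}, p_k = 'X_(k-1). *)
From HB Require Import structures.
From mathcomp Require Import all_boot all_order all_algebra.
From mathcomp Require Import fraction.
From mathcomp Require Import mpoly.
Set Implicit Arguments. Unset Strict Implicit. Unset Printing Implicit Defensive.
Import Order.TTheory GRing.Theory Num.Theory.
Local Open Scope ring_scope.

Definition F : fieldType := {fraction {poly rat}}.
Definition alpha : F := tofrac ('X : {poly rat}).

Definition is_partition (l : seq nat) : bool :=
  sorted geq l && all (fun x => (0 < x)%N) l.

(* all partitions of d: every partition of d has at most d parts, each <= d,
   so it is obtained from some d-tuple with entries in {0..d} by deleting zeros *)
Definition partitions_of (d : nat) : seq (seq nat) :=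
  undup [seq l <- [seq [seq (val x : nat) | x <- val t & (0 < val x)%N]
                  | t : d.-tuple 'I_d.+1]
        | is_partition l && (sumn l == d)].

Definition zee (l : seq nat) : nat :=
  \prod_(1 <= i < (sumn l).+1) (i ^ count_mem i l * (count_mem i l)`!)%N.

Definition dominates (l mu : seq nat) : bool :=
  (sumn l == sumn mu) &&
  all (fun i => sumn (take i mu) <= sumn (take i l))%N
      (iota 0 (size l + size mu).+1).

Section Sym.
Variable N : nat.

(* power sum p_k (k >= 1) as the variable 'X_(k-1); only used for k <= N *)
Definition psum (k : nat) : {mpoly F[N]} :=
  match ltnP k.-1 N with
  | LtnNotGeq h => 'X_(Ordinal h)
  | GeqNotLtn _ => 0
  end.

Definition pprod (l : seq nat) : {mpoly F[N]} := \prod_(k <- l) psum k.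

Definition Qa (n : nat) : {mpoly F[N]} :=
  if n == 0%N then 1 else
  \sum_(l <- partitions_of n) (alpha ^- size l / (zee l)%:R) *: pprod l.

Definition qa (l : seq nat) : {mpoly F[N]} := \prod_(k <- l) Qa k.

(* A_{m,n} = sum_{i,j >= 1} p_{i+j} Q_{m-i} Q_{n-j}; terms with i > m or j > n
   vanish since Q_k = 0 for k < 0 *)
Definition Amn (m n : nat) : {mpoly F[N]} :=
  \sum_(1 <= i < m.+1) \sum_(1 <= j < n.+1) psum (i + j) * Qa (m - i) * Qa (n - j).

End Sym.

Definition bcoef (m n : nat) (l : seq nat) : F :=
  let m' := nth 0%N l 0 in
  let n' := nth 0%N l 1 in
  if (size l <= 2)%N && dominates l [:: m; n] then
    (((m' * (m' != m))%N)%:Z - n'%:Z)%:~R * alpha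
  else 0.

(* Pairing each partition l of k with each of its distinct parts r, and noting
   that deleting r multiplies alpha^-l(l) / z_l by alpha * r * m_r(l), gives
   Newton's identity  sum_(1 <= r <= k) p_r Q_(k-r) = k alpha Q_k.  Applied to
   the inner sums of A_(a+1,b) and A_(a,b+1) it yields
     A_(a+1,b) = A_(a,b+1) + (b+1) alpha Q_a Q_(b+1) - (a+1) alpha Q_(a+1) Q_b,
   so induction on n from A_(m,0) = 0 gives
     A_(m,n) = alpha sum_(m <= a <= m+n) [a (1 - delta_(a,m)) - (m+n-a)] Q_a Q_(m+n-a).
   The partitions with at most two parts dominating (m, n) are exactly the
   (a, m+n-a) with m <= a <= m+n. *)

From HB Require Import structures.
From mathcomp Require Import all_boot all_order all_algebra.
From mathcomp Require Import fraction.
From mathcomp Require Import mpoly.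
From mathcomp Require Import ring zify.
Set Implicit Arguments. Unset Strict Implicit. Unset Printing Implicit Defensive.

Lemma geq_total : total geq.
Proof. by move=> a b; exact: leq_total. Qed.

Lemma geq_trans : transitive geq.
Proof. exact: rev_trans leq_trans. Qed.

Lemma geq_anti : antisymmetric geq.
Proof. by move=> a b; rewrite andbC => /anti_leq. Qed.

Lemma sumn_rem (s : seq nat) r : r \in s -> sumn s = r + sumn (rem r s).
Proof. by move/perm_to_rem/perm_sumn. Qed.

Lemma mem_leq_sumn (s : seq nat) r : r \in s -> r <= sumn s.
Proof. by move/sumn_rem->; exact: leq_addr. Qed.

Lemma size_leq_sumn (s : seq nat) : all (fun x => 0 < x) s -> size s <= sumn s.
Proof. by elim: s => //= a s IH /andP[a_gt0 /IH]; rewrite -add1n; apply: leq_add. Qed.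

Lemma map_nth_iota0 (s : seq nat) d : size s <= d ->
  map (nth 0 s) (iota 0 d) = s ++ nseq (d - size s) 0.
Proof.
move=> le_s_d; apply: (@eq_from_nth _ 0).
  by rewrite size_map size_iota size_cat size_nseq subnKC.
move=> i; rewrite size_map size_iota => lt_i_d.
rewrite (nth_map 0) ?size_iota // nth_iota // add0n nth_cat nth_nseq.
by case: ltnP => // le_s_i; rewrite nth_default //; case: ifP.
Qed.

Lemma mem_partitions_of d l :
  (l \in partitions_of d) = is_partition l && (sumn l == d).
Proof.
rewrite /partitions_of mem_undup mem_filter.
apply/idP/idP => [/andP[]//|pl]; rewrite pl /=.
case/andP: pl => /andP[_ l_pos] /eqP sum_l.
have le_l_d : size l <= d by rewrite -sum_l size_leq_sumn.
pose t := [tuple (inord (nth 0 l i) : 'I_d.+1) | i < d].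
apply/mapP; exists t; first by rewrite mem_enum.
rewrite -filter_map.
have -> : [seq val x | x <- val t] = map (nth 0 l) (iota 0 d).
  rewrite /t /= -val_enum_ord -!map_comp; apply: eq_map => i /=.
  rewrite inordK // ltnS.
  case: (ltnP i (size l)) => [/(mem_nth 0)/mem_leq_sumn | /(nth_default 0)->] //.
  by rewrite sum_l.
rewrite map_nth_iota0 // filter_cat filter_nseq /= cats0.
by apply/esym/all_filterP.
Qed.

Definition add_part (r : nat) (mu : seq nat) : seq nat := sort geq (r :: mu).

Lemma perm_add_part r mu : perm_eq (add_part r mu) (r :: mu).
Proof. by rewrite /add_part perm_sort. Qed.

Lemma sumn_add_part r mu : sumn (add_part r mu) = r + sumn mu.
Proof. exact: perm_sumn (perm_add_part r mu). Qed.

Lemma mem_add_part r mu : r \in add_part r mu.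
Proof. by rewrite (perm_mem (perm_add_part r mu)) mem_head. Qed.

Lemma add_part_partition r mu :
  0 < r -> is_partition mu -> is_partition (add_part r mu).
Proof.
move=> r_gt0 /andP[_ mu_pos]; rewrite /is_partition sort_sorted ?geq_total //.
by rewrite (perm_all _ (perm_add_part r mu)) /= r_gt0.
Qed.

Lemma rem_partition r l : is_partition l -> is_partition (rem r l).
Proof.
case/andP=> l_sorted l_pos; apply/andP; split.
  exact: (subseq_sorted geq_trans (rem_subseq r l)).
by apply/allP=> x /mem_rem; apply: (allP l_pos).
Qed.

Lemma rem_add_part r mu : is_partition mu -> rem r (add_part r mu) = mu.
Proof.
case/andP=> mu_sorted _; apply: (sorted_eq geq_trans geq_anti) => //.
  apply: (subseq_sorted geq_trans (rem_subseq _ _)).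
  exact: (sort_sorted geq_total).
rewrite -(perm_cons r) perm_sym.
by apply: perm_trans (perm_to_rem (mem_add_part r mu)); rewrite perm_sym perm_add_part.
Qed.

Lemma add_part_rem r l : is_partition l -> r \in l -> add_part r (rem r l) = l.
Proof.
case/andP=> l_sorted _ r_in_l; apply: (sorted_eq geq_trans geq_anti) => //.
  exact: (sort_sorted geq_total).
by rewrite (perm_trans (perm_add_part _ _)) // perm_sym perm_to_rem.
Qed.

Definition zee_factor (l : seq nat) (i : nat) : nat :=
  i ^ count_mem i l * (count_mem i l)`!.

Lemma zee_widen l B : sumn l <= B -> zee l = \prod_(1 <= i < B.+1) zee_factor l i.
Proof.
move=> le_l_B; rewrite /zee [RHS](@big_cat_nat _ _ _ (sumn l).+1) //=.
rewrite [X in _ = _ * X]big1_seq ?muln1 // => i /andP[_].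
rewrite mem_index_iota /zee_factor => /andP[lt_l_i _].
have /count_memPn -> : i \notin l.
  by apply: contraTN lt_l_i => /mem_leq_sumn; rewrite -leqNgt.
by rewrite expn0.
Qed.

Lemma zee_rem r l : 0 < r -> r \in l ->
  zee l = r * count_mem r l * zee (rem r l).
Proof.
move=> r_gt0 r_in_l.
have count_l i : count_mem i l = (r == i) + count_mem i (rem r l).
  by rewrite (permP (perm_to_rem r_in_l)).
rewrite (zee_widen (leqnn (sumn l))) (@zee_widen (rem r l) (sumn l)); last first.
  by rewrite [X in _ <= X](sumn_rem r_in_l) leq_addl.
have r_range : r \in index_iota 1 (sumn l).+1.
  by rewrite mem_index_iota r_gt0 ltnS mem_leq_sumn.
rewrite !(bigD1_seq r r_range (iota_uniq _ _)) /=.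
rewrite (eq_bigr (zee_factor (rem r l))); last first.
  by move=> i ne_i_r; rewrite /zee_factor count_l eq_sym (negbTE ne_i_r).
rewrite /zee_factor !count_l eqxx add1n expnS factS.
by rewrite !mulnA [r * r ^ _ * _]mulnAC.
Qed.

Lemma zee_gt0 l : 0 < zee l.
Proof.
rewrite /zee big_seq; apply: prodn_cond_gt0 => i.
by rewrite mem_index_iota => /andP[i_gt0 _]; rewrite muln_gt0 expn_gt0 i_gt0 fact_gt0.
Qed.

Lemma sum_undup_count (s : seq nat) :
  \sum_(r <- undup s) r * count_mem r s = sumn s.
Proof.
transitivity (\sum_(r <- undup s) iterop (count_mem r s) addn r 0).
  by apply: eq_bigr => r _; rewrite Monoid.iteropE iter_addn_0.
by rewrite big_undup_iterop_count sumnE.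
Qed.

Definition two_part (s a : nat) : seq nat := if a == s then [:: s] else [:: a; s - a].

Lemma two_part_inj s : injective (two_part s).
Proof.
move=> a b /(congr1 (head 0)); rewrite /two_part.
by do 2 case: eqP => [->|_] /=.
Qed.

Lemma two_part_dominates m n a : n <= m -> m <= a <= m + n ->
  (size (two_part (m + n) a) <= 2) && dominates (two_part (m + n) a) [:: m; n].
Proof.
move=> le_n_m /andP[le_m_a le_a_mn]; rewrite /two_part /dominates.
case: ifP => [/eqP|/negbT/eqP] a_mn /=; rewrite ?addn0 !andbT;
  by repeat (apply/andP; split); try apply/eqP; lia.
Qed.

Lemma dominating_two_part_partitions m n : 0 < m -> n <= m ->
  perm_eq [seq l <- partitions_of (m + n) | (size l <= 2) && dominates l [:: m; n]]
          [seq two_part (m + n) a | a <- iota m n.+1].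
Proof.
move=> m_gt0 le_n_m.
apply: uniq_perm.
- by rewrite filter_uniq // undup_uniq.
- by rewrite (map_inj_uniq (@two_part_inj _)) iota_uniq.
move=> l; rewrite mem_filter mem_partitions_of; apply/idP/idP.
- case/andP=> /andP[size_l /andP[_ /allP dom_l]] /andP[/andP[l_sorted l_pos] /eqP sum_l].
  suff [a a_range ->] : exists2 a, m <= a <= m + n & l = two_part (m + n) a.
    by apply/mapP; exists a; rewrite // mem_iota; lia.
  case: l size_l l_sorted l_pos sum_l dom_l => [|a [|b [|c l]]] //= _.
  + by move=> _ _; lia.
  + move=> _ _ sum_l _; exists (m + n); first lia.
    by rewrite /two_part eqxx -sum_l addn0.
  + rewrite andbT => le_b_a /and3P[a_gt0 b_gt0 _] sum_l dom_l.
    have := dom_l 1 isT; rewrite /= => le_m_a.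
    exists a; first lia.
    by rewrite /two_part; case: eqP => [?|_]; [lia | congr [:: _; _]; lia].
- case/mapP=> a; rewrite mem_iota => a_range ->.
  rewrite two_part_dominates //; last by lia.
  rewrite /two_part /is_partition; case: ifP => [/eqP|/negbT/eqP] a_mn /=;
    rewrite ?addn0 !andbT; repeat (apply/andP; split); try apply/eqP; lia.
Qed.

Definition insert_pair (x : nat * seq nat) : seq nat * nat := (add_part x.1 x.2, x.1).

Lemma perm_insert_pairs k :
  perm_eq (map insert_pair [seq (r, mu) | r <- iota 1 k, mu <- partitions_of (k - r)])
          [seq (l, r) | l <- partitions_of k, r <- undup l].
Proof.
apply: uniq_perm.
- rewrite map_inj_in_uniq.
    apply: allpairs_uniq_dep; rewrite ?iota_uniq //; first by move=> *; exact: undup_uniq.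
    by move=> [a u] [b v] _ _ /= [-> ->].
  move=> [r mu] [r' mu'] /allpairsPdep[x [y [_ y_in [-> ->]]]].
  move=> /allpairsPdep[x' [y' [_ y'_in [-> ->]]]] /= [eq_add eq_x]; subst x'.
  move: y_in y'_in; rewrite !mem_partitions_of => /andP[py _] /andP[py' _].
  by rewrite -(rem_add_part x py) eq_add rem_add_part.
- apply: allpairs_uniq_dep; first exact: undup_uniq.
  + by move=> l _; exact: undup_uniq.
  + by move=> [a u] [b v] _ _ /= [-> ->].
move=> [l r]; apply/idP/idP.
- case/mapP=> [[r0 mu]] /allpairsPdep[x [y [x_in y_in [-> ->]]]] /= [-> ->].
  move: x_in y_in; rewrite mem_iota mem_partitions_of => /andP[x_gt0 lt_x_k1] /andP[py /eqP sum_y].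
  apply/allpairsPdep; exists (add_part x y), x; split => //; last first.
    by rewrite mem_undup mem_add_part.
  have le_x_k : x <= k by rewrite -ltnS -add1n.
  by rewrite mem_partitions_of add_part_partition // sumn_add_part sum_y subnKC /=.
- case/allpairsPdep=> [l0 [r0 [l0_in r0_in [-> ->]]]].
  move: r0_in l0_in; rewrite mem_undup mem_partitions_of => r0_in /andP[pl /eqP sum_l].
  have r0_gt0 : 0 < r0 by case/andP: pl => _ /allP; apply.
  apply/mapP; exists (r0, rem r0 l0); last by rewrite /insert_pair /= add_part_rem.
  apply/allpairsPdep; exists r0, (rem r0 l0); split => //.
    by rewrite mem_iota r0_gt0 add1n ltnS -sum_l mem_leq_sumn.
  by rewrite mem_partitions_of rem_partition //= -sum_l (sumn_rem r0_in) addKn.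
Qed.

Import Order.TTheory GRing.Theory Num.Theory.
Local Open Scope ring_scope.

Lemma alpha_neq0 : alpha != 0.
Proof. by rewrite tofrac_eq0 polyX_eq0. Qed.

Lemma pnatF_neq0 n : (0 < n)%N -> (n%:R : F) != 0.
Proof.
move=> n_gt0; rewrite -(rmorph_nat (@tofrac _)) tofrac_eq0.
by rewrite -(rmorph_nat (@polyC _)) polyC_eq0 pnatr_eq0 -lt0n.
Qed.

Definition qcoef (l : seq nat) : F := alpha ^- size l / (zee l)%:R.

Lemma qcoef_rem r l : is_partition l -> r \in l ->
  qcoef (rem r l) = alpha * (r * count_mem r l)%:R * qcoef l.
Proof.
case/andP=> _ /allP l_pos r_in_l; have r_gt0 := l_pos r r_in_l.
have count_gt0 : (0 < count_mem r l)%N by rewrite -has_count has_pred1.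
have rc_neq0 : ((r * count_mem r l)%:R : F) != 0 by rewrite pnatF_neq0 // muln_gt0 r_gt0.
have size_gt0 : (0 < size l)%N by rewrite lt0n size_eq0; apply: contraTneq r_in_l => ->.
rewrite /qcoef size_rem // (zee_rem r_gt0 r_in_l) [(_ * zee _)%:R]natrM.
rewrite -[in alpha ^- size l](prednK size_gt0) exprS !invfM mulrACA.
by rewrite mulVKf ?alpha_neq0 // mulVKf.
Qed.

Lemma sum_qcoef_rem l : is_partition l ->
  \sum_(r <- undup l) qcoef (rem r l) = alpha * (sumn l)%:R * qcoef l.
Proof.
move=> pl; rewrite -sum_undup_count natr_sum mulr_sumr mulr_suml.
by rewrite !big_seq; apply: eq_bigr => r; rewrite mem_undup => /(qcoef_rem pl).
Qed.

Section PowerSums.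
Variable N : nat.

Lemma QaE d : Qa N d = \sum_(l <- partitions_of d) qcoef l *: pprod N l.
Proof.
rewrite /Qa; case: eqP => [->|//].
have -> : partitions_of 0 = [:: [::]].
  apply: perm_small_eq => //; apply: uniq_perm; rewrite ?undup_uniq // => l.
  rewrite mem_partitions_of inE; case: l => [|[|a] l] //=.
    by rewrite /is_partition /= andbF.
  by rewrite addSn andbF.
by rewrite big_seq1 /qcoef /pprod big_nil /zee big_geq // expr0 invr1 mulr1 scale1r.
Qed.

Lemma Qa_newton k :
  \sum_(1 <= r < k.+1) psum N r * Qa N (k - r) = (k%:R * alpha) *: Qa N k.
Proof.
pose G (y : seq nat * nat) := qcoef (rem y.2 y.1) *: pprod N y.1.
transitivity (\sum_(x <- [seq (r, mu) | r <- iota 1 k, mu <- partitions_of (k - r)])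
                G (insert_pair x)).
  rewrite big_allpairs_dep /index_iota subSS subn0.
  apply: eq_big_seq => r _; rewrite QaE mulr_sumr !big_seq.
  apply: eq_bigr => mu; rewrite mem_partitions_of => /andP[pmu _].
  rewrite /G /insert_pair /= rem_add_part //.
  by rewrite /pprod (perm_big _ (perm_add_part r mu)) big_cons scalerAr.
rewrite -(big_map insert_pair xpredT G) (perm_big _ (perm_insert_pairs k)).
rewrite big_allpairs_dep QaE scaler_sumr !big_seq; apply: eq_bigr => l.
rewrite mem_partitions_of => /andP[pl /eqP sum_l].
by rewrite /G /= -scaler_suml sum_qcoef_rem // scalerA sum_l (mulrC alpha).
Qed.

Lemma Qa_newton_tail b : \sum_(1 <= j < b.+1) psum N j.+1 * Qa N (b - j) =
  (b.+1%:R * alpha) *: Qa N b.+1 - psum N 1 * Qa N b.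
Proof.
rewrite -Qa_newton [in RHS]big_ltn // [in RHS]big_add1 /= subn1 addrAC subrr add0r.
by apply: eq_bigr => j _; rewrite subSS.
Qed.

Lemma Amn0 m : Amn N m 0 = 0.
Proof. by rewrite /Amn big1 // => i _; rewrite big_geq. Qed.

(* Both sides split as the common double sum [D] plus one Newton sum. *)
Lemma AmnSl a b : Amn N a.+1 b = Amn N a b.+1 +
  (Qa N a * ((b.+1%:R * alpha) *: Qa N b.+1) - Qa N b * ((a.+1%:R * alpha) *: Qa N a.+1)).
Proof.
pose D := \sum_(1 <= i < a.+1) \sum_(1 <= j < b.+1)
            psum N (i + j.+1) * Qa N (a - i) * Qa N (b - j).
have AmnSl_split : Amn N a.+1 b =
    Qa N a * (\sum_(1 <= j < b.+1) psum N j.+1 * Qa N (b - j)) + D.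
  rewrite /Amn big_ltn // big_add1 /=; congr (_ + _).
    by rewrite mulr_sumr; apply: eq_bigr => j _; rewrite add1n subn1 /=; ring.
  by apply: eq_bigr => i _; apply: eq_bigr => j _; rewrite subSS addSnnS.
have AmnSr_split : Amn N a b.+1 =
    Qa N b * (\sum_(1 <= i < a.+1) psum N i.+1 * Qa N (a - i)) + D.
  rewrite /Amn; under eq_bigr => i _ do rewrite big_ltn // big_add1 /=.
  rewrite big_split /=; congr (_ + _).
  by rewrite mulr_sumr; apply: eq_bigr => i _; rewrite addn1 subn1 /=; ring.
by rewrite AmnSl_split AmnSr_split !Qa_newton_tail; ring.
Qed.

(* The coefficient m'(1 - delta_{m,m'}) - n' of the paper, for (m', n') = (a, s - a). *)
Definition Acoef (m s a : nat) : F := (a * (a != m))%:R - (s - a)%:R.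

Lemma AmnE m n : Amn N m n =
  \sum_(a <- iota m n.+1) (Acoef m (m + n) a * alpha) *: (Qa N a * Qa N (m + n - a)).
Proof.
elim: n m => [|n IHn] m.
  by rewrite Amn0 big_seq1 /Acoef eqxx muln0 addn0 subnn subrr mul0r scale0r.
rewrite -[Amn N m n.+1](addrK (Qa N m * ((n.+1%:R * alpha) *: Qa N n.+1) -
  Qa N n * ((m.+1%:R * alpha) *: Qa N m.+1))) -AmnSl IHn addSnnS /= !big_cons.
have Acoef_tail : \sum_(j <- iota m.+2 n)
     (Acoef m.+1 (m + n.+1) j * alpha) *: (Qa N j * Qa N (m + n.+1 - j)) =
   \sum_(j <- iota m.+2 n)
     (Acoef m (m + n.+1) j * alpha) *: (Qa N j * Qa N (m + n.+1 - j)).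
  apply: eq_big_seq => j; rewrite mem_iota => /andP[lt_m1_j _].
  have [ne_j_m ne_j_m1] : (j != m) /\ (j != m.+1) by split; apply/eqP; lia.
  by rewrite /Acoef ne_j_m ne_j_m1.
have ne_m1_m : (m.+1 != m) by rewrite neq_ltn ltnSn orbT.
rewrite Acoef_tail /Acoef !eqxx ne_m1_m !muln0 muln1.
have -> : (m + n.+1 - m = n.+1)%N by lia.
have -> : (m + n.+1 - m.+1 = n)%N by lia.
rewrite -!mul_mpolyC !(rmorphM, rmorphB, rmorph_nat).
ring.
Qed.

Lemma qa_two_part s a : (a <= s)%N -> qa N (two_part s a) = Qa N a * Qa N (s - a).
Proof.
rewrite /two_part /qa; case: ifP => [/eqP-> _|_ _]; last by rewrite big_cons big_seq1.
by rewrite big_seq1 subnn mulr1.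
Qed.

End PowerSums.

Lemma bcoef_two_part m n a : (n <= m)%N -> (m <= a <= m + n)%N ->
  bcoef m n (two_part (m + n) a) = Acoef m (m + n) a * alpha.
Proof.
move=> le_n_m a_range; rewrite /bcoef two_part_dominates // mulrzBr /Acoef.
by rewrite /two_part; case: ifP => [/eqP->|_] //=; rewrite subnn.
Qed.

Unset Implicit Arguments.

Theorem lemma3p8 (N m n : nat) :
  (0 < n)%N -> (n <= m)%N -> (m + n <= N)%N ->
  Amn N m n = \sum_(l <- partitions_of (m + n)) bcoef m n l *: qa N l.
Proof.
move=> n_gt0 le_n_m _.
rewrite [RHS](bigID (fun l => (size l <= 2)%N && dominates l [:: m; n])) /=.
rewrite [X in _ + X]big1 ?addr0 => [|l /negbTE not_dom]; last first.
  by rewrite /bcoef not_dom scale0r.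
rewrite -big_filter (perm_big _ (dominating_two_part_partitions _ le_n_m)) ?big_map;
  last exact: leq_trans le_n_m.
rewrite AmnE; apply: eq_big_seq => a; rewrite mem_iota addnS ltnS => a_range.
by rewrite bcoef_two_part // qa_two_part //; case/andP: a_range.
Qed.
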